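(* Assume $\rho_\alpha^{\mathrm{dir}}<1$, and let $\theta^\star$ be the unique projected Bellman fixed point. Fix $\varepsilon>0$ with $\beta_\varepsilon:=\rho_\alpha^{\mathrm{dir}}+\varepsilon<1$, and let $p_\varepsilon$ and $C_\varepsilon$ be as described in the context. Assume additionally that \[ \lambda_\varepsilon:=\beta_\varepsilon+2\alpha\sqrt{C_\varepsilon}(1+\gamma)\phi_{\max}^2<1. \] Let \[ K:=2\alpha\sqrt{C_\varepsilon}\,\phi_{\max}\big(R_{\max}+(1+\gamma)\|\Phi\theta^\star\|_\infty\big). \] Then for all $k\ge0$, with $x_k:=\theta_k-\theta^\star$, we have \[ \mathbb E[p_\varepsilon(x_k)]\le\lambda_\varepsilon^k p_\varepsilon(x_0)+\frac{K}{1-\lambda_\varepsilon}(1-\lambda_\varepsilon^k), \] \[ \mathbb E[\|\theta_k-\theta^\star\|_2]\le\sqrt{C_\varepsilon}\,\lambda_\varepsilon^k\|\theta_0-\theta^\star\|_2+\frac{K}{1-\lambda_\varepsilon}, \] \[ \limsup_{k\to\infty}\mathbb E[\|\theta_k-\theta^\star\|_2]\le\frac{K}{1-\lambda_\varepsilon}, \] \[ \mathbb E[\|\Phi\theta_k-\Phi\theta^\star\|_2]\le\|\Phi\|_2\Big(\sqrt{C_\varepsilon}\lambda_\varepsilon^k\|\theta_0-\theta^\star\|_2+\frac{K}{1-\lambda_\varepsilon}\Big). \]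
   Context: Consider a finite discounted MDP with state space $\mathcal S=\{1,\dots,|\mathcal S|\}$, action space $\mathcal A=\{1,\dots,|\mathcal A|\}$, transition probabilities $P(s'\mid s,a)$, real rewards $r(s,a,s')$, expected reward $R(s,a)=\sum_{s'}P(s'\mid s,a)r(s,a,s')$, and discount factor $\gamma\in(0,1)$. Let $R_{\max}:=\max_{s,a,s'}|r(s,a,s')|$. State-action vectors are ordered as $(1,1),(2,1),\dots,(|\mathcal S|,1),(1,2),\dots$. The matrix $P\in\mathbb R^{|\mathcal S||\mathcal A|\times|\mathcal S|}$ has rows $P(\cdot\mid s,a)$, and $R$ is the vector with entries $R(s,a)$. The set $\Theta$ is the finite set of deterministic stationary policies $\pi:\mathcal S\to\mathcal A$. For $\pi\in\Theta$, $\Pi^\pi\in\mathbb R^{|\mathcal S|\times|\mathcal S||\mathcal A|}$ has entry $1$ at row $s$, column $(s,\pi(s))$, and zeros elsewhere. The feature matrix $\Phi\in\mathbb R^{|\mathcal S||\mathcal A|\times m}$ has full column rank and rows $\phi(s,a)^\top$. Let $\phi_{\max}:=\max_{s,a}\|\phi(s,a)\|_2$, and define $V_\theta(s):=\max_a\phi(s,a)^\top\theta$. The distribution $d$ on $\mathcal S\times\mathcal A$ satisfies $d(s,a)>0$ for all pairs, and $D=\mathrm{diag}(d)$. The step size is $\alpha\in(0,1)$. Define $g(\theta):=\Phi^\top D(R+\gamma PV_\theta-\Phi\theta)$. A projected Bellman fixed point is a $\theta^\star$ with $g(\theta^\star)=0$. For $\pi\in\Theta$, define $A_\pi:=I-\alpha\Phi^\top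 D\Phi+\alpha\gamma\Phi^\top DP\Pi^\pi\Phi$. Let $\rho_\alpha^{\mathrm{dir}}$ be the joint spectral radius $\lim_k\max_{\pi_1,\dots,\pi_k}\|A_{\pi_k}\cdots A_{\pi_1}\|^{1/k}$ of $\{A_\pi:\pi\in\Theta\}$. When $\rho_\alpha^{\mathrm{dir}}<1$, a projected Bellman fixed point exists and is unique. Lyapunov norm: for $\beta_\varepsilon<1$ as in the claim, set \[ V_\varepsilon^\infty(x):=\lim_{t\to\infty}\sum_{\ell=0}^{t}\beta_\varepsilon^{-2\ell}\max_{\pi_1,\dots,\pi_\ell\in\Theta}\|A_{\pi_\ell}\cdots A_{\pi_1}x\|_2^2, \] where the $\ell=0$ term is $\|x\|_2^2$, and set $p_\varepsilon:=\sqrt{V_\varepsilon^\infty}$ (a norm). Let $C_\varepsilon\ge1$ be a constant with $\|x\|_2^2\le V_\varepsilon^\infty(x)\le C_\varepsilon\|x\|_2^2$ for all $x\in\mathbb R^m$ (such a constant exists). i.i.d. linear Q-learning: $\theta_0\in\mathbb R^m$ is deterministic. At each time $k$, $(s_k,a_k)$ is drawn independently according to $d$, then $s'_k\sim P(\cdot\mid s_k,a_k)$, and $r_{k+1}:=r(s_k,a_k,s'_k)$. The update is \[ \theta_{k+1}=\theta_k+\alpha\phi(s_k,a_k)\Big(r_{k+1}+\gamma\max_{u\in\mathcal A}\phi(s'_k,u)^\top\theta_k-\phi(s_k,a_k)^\top\theta_k\Big). \] *)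

From HB Require Import structures.
From mathcomp Require Import all_boot all_order all_algebra.
From mathcomp Require Import all_classical all_reals all_analysis.
Set Implicit Arguments. Unset Strict Implicit. Unset Printing Implicit Defensive.
Import Order.TTheory GRing.Theory Num.Theory.
Local Open Scope ring_scope.
Local Open Scope classical_set_scope.

Section QL.
Variable R : realType.

Definition norm2 {n} (x : 'cV[R]_n) : R := Num.sqrt (\sum_i (x i 0) ^+ 2).
Definition dotv {n} (x y : 'cV[R]_n) : R := \sum_i x i 0 * y i 0.
Definition norminf {n} (x : 'cV[R]_n) : R := \big[Num.max/0]_i `|x i 0|.
Definition opnorm2 {p q} (M : 'M[R]_(p, q)) : R :=
  sup [set norm2 (M *m x) | x in [set x : 'cV[R]_q | norm2 x <= 1]].

Variables (nS nA m : nat).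
Notation S := 'I_nS.+1.
Notation A := 'I_nA.+1.
Definition policy := {ffun S -> A}.

(** The feature matrix Phi has rows indexed by state-action pairs, ordered
    (1,1),(2,1),...,(|S|,1),(1,2),...: the pair (s,a) is row a*|S| + s. *)
Definition sa_index (s : S) (a : A) : 'I_(nA.+1 * nS.+1) := mxvec_index a s.
Definition feat (Phi : 'M[R]_(nA.+1 * nS.+1, m)) (s : S) (a : A) : 'cV[R]_m :=
  (row (sa_index s a) Phi)^T.

Variables (P : S -> A -> S -> R) (r : S -> A -> S -> R) (d : S -> A -> R)
  (Phi : 'M[R]_(nA.+1 * nS.+1, m)) (gamma alpha : R).

Definition Rexp (s : S) (a : A) : R := \sum_s' P s a s' * r s a s'.
Definition Rmax : R := \big[Num.max/0]_(s : S) \big[Num.max/0]_(a : A)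
                         \big[Num.max/0]_(s' : S) `|r s a s'|.
Definition phimax : R := \big[Num.max/0]_(s : S) \big[Num.max/0]_(a : A)
                           norm2 (feat Phi s a).
Definition Vth (th : 'cV[R]_m) (s : S) : R :=
  \big[Num.max/dotv (feat Phi s ord0) th]_(u : A) dotv (feat Phi s u) th.

(** g(theta) = Phi^T D (R + gamma P V_theta - Phi theta), written out *)
Definition gfun (th : 'cV[R]_m) : 'cV[R]_m :=
  \sum_(s : S) \sum_(a : A) (d s a * (Rexp s a + gamma * \sum_s' P s a s' * Vth th s'
                                 - dotv (feat Phi s a) th)) *: feat Phi s a.

(** A_pi = I - alpha Phi^T D Phi + alpha gamma Phi^T D P Pi^pi Phi, written out *)
Definition Api (pi : policy) : 'M[R]_m :=
  1%:M - alpha *: (\sum_(s : S) \sum_(a : A) d s a *: (feat Phi s a *m (feat Phi s a)^T))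
  + (alpha * gamma) *: (\sum_(s : S) \sum_(a : A) d s a *:
        (feat Phi s a *m (\sum_(s' : S) P s a s' *: feat Phi s' (pi s'))^T)).

(** A_{pi_k} ... A_{pi_1} for the tuple [pi_1; ...; pi_k] *)
Definition prodA (pis : seq policy) : 'M[R]_m :=
  foldl (fun M pi => Api pi *m M) 1%:M pis.

Definition rho_dir : R :=
  limn (fun k : nat => powR (\big[Num.max/0]_(t : k.-tuple policy) opnorm2 (prodA t))
                            (k%:R^-1)).

Definition Vlyap (beta : R) (x : 'cV[R]_m) : R :=
  limn (fun t : nat => \sum_(0 <= l < t.+1)
          beta ^- (2 * l) * \big[Num.max/0]_(pis : l.-tuple policy)
                               (norm2 (prodA pis *m x)) ^+ 2).
Definition plyap (beta : R) (x : 'cV[R]_m) : R := Num.sqrt (Vlyap beta x).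

Definition sample := (S * A * S)%type.
Definition sample_prob (w : sample) : R := d w.1.1 w.1.2 * P w.1.1 w.1.2 w.2.
Definition qstep (th : 'cV[R]_m) (w : sample) : 'cV[R]_m :=
  let: (s, a, s') := w in
  th + (alpha * (r s a s' + gamma * Vth th s' - dotv (feat Phi s a) th))
         *: feat Phi s a.
Definition qiter (th0 : 'cV[R]_m) (ws : seq sample) : 'cV[R]_m := foldl qstep th0 ws.

Definition Eiter (th0 : 'cV[R]_m) (k : nat) (f : 'cV[R]_m -> R) : R :=
  \sum_(ws : k.-tuple sample)
     (\prod_(i < k) sample_prob (tnth ws i)) * f (qiter th0 ws).

End QL.

From HB Require Import structures.
From mathcomp Require Import all_boot all_order all_algebra.
From mathcomp Require Import all_classical all_reals all_analysis.
From mathcomp Require Import ring.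
Import Order.TTheory GRing.Theory Num.Theory numFieldNormedType.Exports.
Set Implicit Arguments. Unset Strict Implicit. Unset Printing Implicit Defensive.
Local Open Scope ring_scope.
Local Open Scope classical_set_scope.

(* Write x_k := θ_k - θ⋆. As g(θ⋆) = 0, a Q-learning step splits as
   x_{k+1} = (x_k + α g(θ_k)) + α (δ_k φ(s_k,a_k) - g(θ_k)),
   a mean step plus sampling noise. The mean step is x + α Φᵀ D (γ P v - Φ x) with
   v = V_θ - V_θ⋆; it is affine in v, and v lies in the box between the values of Φ x
   at the greedy actions of θ⋆ and of θ. The norm of any product A_{π_l} ... A_{π_1}
   applied to it is quasi-convex in v, hence maximal at a vertex of the box, where the
   mean step is A_π x for some policy π. So each term of the series defining V_ε at the
   mean step is dominated by the next term at x, and p_ε contracts the mean step by β_ε.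
   The noise is bounded on every sample path by
   2 α φ_max (R_max + (1 + γ) (‖Φ θ⋆‖_∞ + φ_max ‖x_k‖_2)), and C_ε compares p_ε with the
   Euclidean norm, so p_ε(x_{k+1}) <= λ_ε p_ε(x_k) + K pathwise; iterating and averaging
   over sample paths gives all four bounds. *)

Lemma sqrtr_le (R : rcfType) (x y : R) : 0 <= y -> x <= y ^+ 2 -> Num.sqrt x <= y.
Proof. by move=> y0 xy; rewrite -(ger0_norm y0) -sqrtr_sqr ler_wsqrtr. Qed.

Lemma ler_sqrtr (R : rcfType) (x y : R) : 0 <= x -> x ^+ 2 <= y -> x <= Num.sqrt y.
Proof. by move=> x0 xy; rewrite -(ger0_norm x0) -sqrtr_sqr ler_wsqrtr. Qed.

Section WeightedSums.
Variables (R : rcfType) (I : finType) (w : I -> R).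
Hypothesis w_ge0 : forall i, 0 <= w i.

Lemma wsum_sqr_ge0 (a : I -> R) : 0 <= \sum_i w i * a i ^+ 2.
Proof. by apply: sumr_ge0 => i _; rewrite mulr_ge0 ?sqr_ge0. Qed.

(* Lagrange's identity: twice the defect is a sum of weighted squares. *)
Lemma weighted_cauchy_schwarz (a b : I -> R) :
  (\sum_i w i * a i * b i) ^+ 2 <= (\sum_i w i * a i ^+ 2) * (\sum_i w i * b i ^+ 2).
Proof.
have sumM (f g : I -> R) : (\sum_i f i) * (\sum_j g j) = \sum_i \sum_j f i * g j.
  by rewrite mulr_suml; apply: eq_bigr => i _; rewrite mulr_sumr.
pose F i j := w i * a i ^+ 2 * (w j * b j ^+ 2).
pose G i j := w i * a i * b i * (w j * a j * b j).
have lagrange : \sum_i \sum_j w i * w j * (a i * b j - a j * b i) ^+ 2 =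
    (\sum_i \sum_j F i j) *+ 2 - (\sum_i \sum_j G i j) *+ 2.
  rewrite mulr2n {2}(exchange_big _ _ _ _ _ F) -big_split -sumrMnl -sumrB /=.
  apply: eq_bigr => i _; rewrite -big_split -sumrMnl -sumrB /=.
  by apply: eq_bigr => j _; rewrite /F /G; ring.
have : 0 <= \sum_i \sum_j w i * w j * (a i * b j - a j * b i) ^+ 2.
  by apply: sumr_ge0 => i _; apply: sumr_ge0 => j _; rewrite mulr_ge0 ?sqr_ge0 ?mulr_ge0.
by rewrite lagrange -!sumM -expr2 subr_ge0 lerMn2r.
Qed.

Lemma weighted_cauchy_schwarz_sqrt (a b : I -> R) :
  \sum_i w i * a i * b i <=
    Num.sqrt (\sum_i w i * a i ^+ 2) * Num.sqrt (\sum_i w i * b i ^+ 2).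
Proof.
rewrite -sqrtrM ?wsum_sqr_ge0 //; apply: le_trans (ler_norm _) _.
by rewrite -sqrtr_sqr ler_wsqrtr // weighted_cauchy_schwarz.
Qed.

Lemma weighted_minkowski (a b : I -> R) :
  Num.sqrt (\sum_i w i * (a i + b i) ^+ 2) <=
    Num.sqrt (\sum_i w i * a i ^+ 2) + Num.sqrt (\sum_i w i * b i ^+ 2).
Proof.
apply: sqrtr_le; first by rewrite addr_ge0 ?sqrtr_ge0.
have -> : \sum_i w i * (a i + b i) ^+ 2 = \sum_i w i * a i ^+ 2 +
    (\sum_i w i * a i * b i) *+ 2 + \sum_i w i * b i ^+ 2.
  by rewrite -sumrMnl -!big_split; apply: eq_bigr => i _ /=; ring.
rewrite sqrrD !sqr_sqrtr ?wsum_sqr_ge0 // lerD2r lerD2l lerMn2r /=.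
exact: weighted_cauchy_schwarz_sqrt.
Qed.

End WeightedSums.

Lemma foldl_affine_le (R : realFieldType) (T W : Type) (step : T -> W -> T) (f : T -> R)
    (lam K : R) :
  lam < 1 -> 0 <= lam -> (forall t w, f (step t w) <= lam * f t + K) ->
  forall t0 ws, f (foldl step t0 ws) <=
    lam ^+ size ws * f t0 + K / (1 - lam) * (1 - lam ^+ size ws).
Proof.
move=> lam_lt1 lam_ge0 step_le t0; elim/last_ind => [|ws w IH].
  by rewrite expr0 mul1r subrr mulr0 addr0.
rewrite foldl_rcons size_rcons; apply: le_trans (step_le _ _) _.
apply: le_trans (lerD (ler_wpM2l lam_ge0 IH) (lexx K)) _.
by rewrite le_eqVlt; apply/orP; left; apply/eqP; rewrite exprS; field; rewrite subr_eq0 gt_eqF.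
Qed.

(* Also for divergent [u], for which [limn u] is the junk value [0]. *)
Lemma limn_ge0 (R : realType) (u : nat -> R) : (forall n, 0 <= u n) -> 0 <= limn u.
Proof.
move=> u_ge0; have [u_cvg|u_dvg] := pselect (cvgn u); last by rewrite (dvgP u_dvg).
by apply: limr_ge => //; exact: nearW.
Qed.

Lemma limn_esup_le_geometric (R : realType) (u : nat -> R) (c lam L : R) :
  `|lam| < 1 -> (forall k, u k <= c * lam ^+ k + L) ->
  (limn_esup (fun k => (u k)%:E) <= L%:E)%E.
Proof.
move=> lam_lt1 u_le; pose v k := c * lam ^+ k + L.
have v_cvg : (fun k => (v k)%:E) @ \oo --> L%:E.
  apply: cvg_EFin; first exact: nearW.
  rewrite -[L]add0r -(mulr0 c); apply: cvgD; last exact: cvg_cst.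
  by apply: cvgM; [exact: cvg_cst|exact: cvg_expr].
rewrite limn_esup_lim; apply: (@le_trans _ _ (limn (esups (fun k => (v k)%:E)))).
  apply: lee_lim; [exact: is_cvg_esups|exact: is_cvg_esups|apply: nearW => n].
  apply: ge_ereal_sup => _ [k /= nk <-]; apply: (@le_trans _ _ (v k)%:E).
    by rewrite lee_fin u_le.
  by apply: ereal_sup_ubound; exists k.
by rewrite -limn_esup_lim (cvg_limn_einf_sup v_cvg).2.
Qed.

Lemma sum_tuple_prod (R : comPzSemiRingType) (T : finType) (f : T -> R) k :
  \sum_(ws : k.-tuple T) \prod_(i < k) f (tnth ws i) = (\sum_t f t) ^+ k.
Proof.
rewrite -[k in RHS]card_ord -prodr_const bigA_distr_bigA /=.
rewrite (reindex (fun g : {ffun 'I_k -> T} => [tuple g i | i < k])) /=.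
  by apply: eq_bigr => g _; apply: eq_bigr => i _; rewrite tnth_mktuple.
exists (fun t => [ffun i => tnth t i]) => [g _ | t _].
  by apply/ffunP => i; rewrite ffunE tnth_mktuple.
by apply: eq_from_tnth => i; rewrite tnth_mktuple ffunE.
Qed.

Section EuclideanNorm.
Variables (R : realType) (n : nat).
Implicit Types (x y u : 'cV[R]_n) (c : R).

Lemma norm2_ge0 x : 0 <= norm2 x.
Proof. exact: sqrtr_ge0. Qed.

Lemma norm2E x : norm2 x = Num.sqrt (\sum_i 1 * x i 0 ^+ 2).
Proof. by under eq_bigr do rewrite mul1r. Qed.

Lemma ler_norm2D x y : norm2 (x + y) <= norm2 x + norm2 y.
Proof.
rewrite !norm2E; under eq_bigr do rewrite mxE.
exact: weighted_minkowski.
Qed.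

Lemma norm2Z c x : norm2 (c *: x) = `|c| * norm2 x.
Proof.
rewrite /norm2 -sqrtr_sqr -sqrtrM ?sqr_ge0 // mulr_sumr.
by congr Num.sqrt; apply: eq_bigr => i _; rewrite mxE exprMn.
Qed.

Lemma norm2N x : norm2 (- x) = norm2 x.
Proof. by rewrite -scaleN1r norm2Z normrN1 mul1r. Qed.

Lemma norm2_0 : norm2 (0 : 'cV[R]_n) = 0.
Proof. by rewrite -(scale0r 0) norm2Z normr0 mul0r. Qed.

Lemma norm2_eq0 x : norm2 x = 0 -> x = 0.
Proof.
move/eqP; rewrite sqrtr_eq0 => sum_le0.
have /psumr_eq0P x0 : \sum_i x i 0 ^+ 2 = 0.
  by apply/eqP; rewrite eq_le sum_le0 sumr_ge0 // => i _; exact: sqr_ge0.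
apply/matrixP => i j; rewrite (ord1 j) mxE.
by apply/eqP; rewrite -sqrf_eq0 x0 // => k _; exact: sqr_ge0.
Qed.

Lemma norm2_sum (I : Type) (s : seq I) (Q : pred I) (F : I -> 'cV[R]_n) :
  norm2 (\sum_(i <- s | Q i) F i) <= \sum_(i <- s | Q i) norm2 (F i).
Proof.
elim/big_ind2: _ => [|a b c e h1 h2|//]; first by rewrite norm2_0.
by apply: le_trans (ler_norm2D _ _) _; exact: lerD.
Qed.

Lemma dotv_le_norm2 u x : dotv u x <= norm2 u * norm2 x.
Proof.
have := weighted_cauchy_schwarz_sqrt (fun=> ler01) (u ^~ 0) (x ^~ 0).
by rewrite -!norm2E; under eq_bigr do rewrite mul1r.
Qed.

Lemma dotvNl u x : dotv (- u) x = - dotv u x.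
Proof. by rewrite /dotv -sumrN; apply: eq_bigr => i _; rewrite mxE mulNr. Qed.

Lemma normr_dotv_le u x : `|dotv u x| <= norm2 u * norm2 x.
Proof.
have [/ger0_norm->|/ltr0_norm->] := lerP 0 (dotv u x); first exact: dotv_le_norm2.
by rewrite -dotvNl -(norm2N u) dotv_le_norm2.
Qed.

Lemma dotvDr u x y : dotv u (x + y) = dotv u x + dotv u y.
Proof. by rewrite /dotv -big_split; apply: eq_bigr => i _; rewrite mxE mulrDr. Qed.

Lemma dotvBr u x y : dotv u (x - y) = dotv u x - dotv u y.
Proof. by rewrite /dotv -sumrB; apply: eq_bigr => i _; rewrite !mxE mulrBr. Qed.

Lemma dotv_suml (I : finType) (c : I -> R) (v : I -> 'cV[R]_n) x :
  dotv (\sum_i c i *: v i) x = \sum_i c i * dotv (v i) x.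
Proof.
rewrite /dotv (eq_bigr (fun k => \sum_i c i * (v i k 0 * x k 0))).
  by rewrite exchange_big; apply: eq_bigr => i _; rewrite mulr_sumr.
by move=> k _; rewrite summxE mulr_suml; apply: eq_bigr => i _; rewrite mxE mulrA.
Qed.

Lemma trmx_mul_dotv u x : u^T *m x = (dotv u x)%:M.
Proof.
apply/matrixP => i j; rewrite (ord1 i) (ord1 j) !mxE /= mulr1n.
by apply: eq_bigr => k _; rewrite mxE.
Qed.

Lemma ler_norminf x i : `|x i 0| <= norminf x.
Proof. exact: le_bigmax. Qed.

Lemma norminf_ge0 x : 0 <= norminf x.
Proof. by rewrite /norminf; elim/big_ind: _ => // a b a0 _; rewrite le_max a0. Qed.

End EuclideanNorm.

Section OperatorNorm.
Variables (R : realType) (p q : nat) (M : 'M[R]_(p, q)).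

Let frobenius := Num.sqrt (\sum_i norm2 (row i M)^T ^+ 2).

Lemma norm2_mulmx_le_frobenius x : norm2 (M *m x) <= frobenius * norm2 x.
Proof.
rewrite -[norm2 x]ger0_norm ?norm2_ge0 // -sqrtr_sqr -sqrtrM; last first.
  by apply: sumr_ge0 => i _; exact: sqr_ge0.
apply: ler_wsqrtr; rewrite mulr_suml; apply: ler_sum => i _.
have -> : (M *m x) i 0 = dotv (row i M)^T x.
  by rewrite mxE /dotv; apply: eq_bigr => k _; rewrite !mxE.
rewrite -exprMn -real_normK ?num_real // ler_sqr ?nnegrE ?mulr_ge0 ?norm2_ge0 //.
exact: normr_dotv_le.
Qed.

Let image_unit_ball := [set norm2 (M *m x) | x in [set x : 'cV[R]_q | norm2 x <= 1]].

Let image_unit_ball_ub : has_ubound image_unit_ball.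
Proof.
exists frobenius => _ [x /= x1 <-]; apply: le_trans (norm2_mulmx_le_frobenius x) _.
by rewrite ler_piMr ?sqrtr_ge0.
Qed.

Let le_opnorm2 x : norm2 x <= 1 -> norm2 (M *m x) <= opnorm2 M.
Proof. by move=> x1; apply: (ub_le_sup image_unit_ball_ub); exists x. Qed.

Lemma opnorm2_ge0 : 0 <= opnorm2 M.
Proof. by have := le_opnorm2 (x := 0); rewrite mulmx0 !norm2_0 ler01; apply. Qed.

Lemma norm2_mulmx_le_opnorm2 x : norm2 (M *m x) <= opnorm2 M * norm2 x.
Proof.
have [->|x_neq0] := eqVneq x 0; first by rewrite mulmx0 !norm2_0 mulr0.
have x_gt0 : 0 < norm2 x.
  by rewrite lt_neqAle norm2_ge0 andbT eq_sym; apply: contra x_neq0 => /eqP/norm2_eq0->.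
have /le_opnorm2 : norm2 ((norm2 x)^-1 *: x) <= 1.
  by rewrite norm2Z ger0_norm ?invr_ge0 ?norm2_ge0 // mulVf ?gt_eqF.
by rewrite -scalemxAr norm2Z ger0_norm ?invr_ge0 ?norm2_ge0 // mulrC ler_pdivrMr.
Qed.

End OperatorNorm.

Section QuasiconvexBox.
Variables (R : realType) (I : finType) (lo hi : I -> R).

Definition update (v : I -> R) (i0 : I) (y : R) : I -> R :=
  fun i => if i == i0 then y else v i.

Lemma box_segment (v : I -> R) i0 : lo i0 <= v i0 <= hi i0 ->
  exists2 t, 0 <= t <= 1 &
    v = fun i => t * update v i0 (hi i0) i + (1 - t) * update v i0 (lo i0) i.
Proof.
move=> /andP[lo_v v_hi]; rewrite /update.
have [hi_lo|hi_neq_lo] := eqVneq (hi i0) (lo i0).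
  exists 1; first by rewrite ler01 lexx.
  apply: funext => i; rewrite subrr mul0r addr0 mul1r.
  by case: eqP => [->|//]; apply/eqP; rewrite eq_le v_hi hi_lo lo_v.
have gap : 0 < hi i0 - lo i0.
  by rewrite subr_gt0 lt_neqAle eq_sym hi_neq_lo (le_trans lo_v v_hi).
exists ((v i0 - lo i0) / (hi i0 - lo i0)).
  by rewrite divr_ge0 ?(ltW gap) ?subr_ge0 //= ler_pdivrMr // mul1r lerB.
apply: funext => i; case: eqP => [->|_]; last by ring.
by field; rewrite gt_eqF.
Qed.

Local Notation vertex c := (fun i => if c i then hi i else lo i).

Variable F : (I -> R) -> R.
Hypothesis F_quasiconvex : forall v1 v2 t, 0 <= t <= 1 ->
  F (fun i => t * v1 i + (1 - t) * v2 i) <= Num.max (F v1) (F v2).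

(* Induction on the list of coordinates not yet pushed to a face of the box. *)
Lemma quasiconvex_box_vertex (v : I -> R) : (forall i, lo i <= v i <= hi i) ->
  exists c : I -> bool, F v <= F (vertex c).
Proof.
suff vertexP (s : seq I) : forall v, (forall i, lo i <= v i <= hi i) ->
    (forall i, i \notin s -> v i = hi i \/ v i = lo i) ->
    exists c : I -> bool, F v <= F (vertex c).
  by move=> v_box; apply: (vertexP (enum I)) => // i; rewrite mem_enum.
elim: s => [|i0 s IH] {}v v_box v_face.
  exists (fun i => v i == hi i).
  suff -> : (fun i => if v i == hi i then hi i else lo i) = v by [].
  apply: funext => i; case: eqP => // ne_hi.
  by case: (v_face i isT) => [/ne_hi|->].
have IHu y : lo i0 <= y <= hi i0 -> y = hi i0 \/ y = lo i0 ->
    exists c : I -> bool, F (update v i0 y) <= F (vertex c).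
  move=> y_box y_face; apply: IH => i; rewrite /update; case: eqP => [->//|ne_i] //.
  by move=> i_s; apply: v_face; rewrite in_cons negb_or i_s andbT; apply/eqP.
have /andP[lo_v v_hi] := v_box i0.
have lo_hi : lo i0 <= hi i0 := le_trans lo_v v_hi.
have [c1 le1] := IHu (hi i0) (introT andP (conj lo_hi (lexx _))) (or_introl erefl).
have [c2 le2] := IHu (lo i0) (introT andP (conj (lexx _) lo_hi)) (or_intror erefl).
have [t t01 ->] := box_segment (v_box i0).
have le_max12 := le_trans (F_quasiconvex _ _ t01) (le_max2 le1 le2).
have [c le_c] : exists c, Num.max (F (vertex c1)) (F (vertex c2)) <= F (vertex c).
  by case: leP => _; [exists c2|exists c1].
by exists c; apply: le_trans le_max12 le_c.
Qed.

End QuasiconvexBox.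

Section Lyapunov.
Variables (R : realType) (nS nA m : nat).
Variables (P : 'I_nS.+1 -> 'I_nA.+1 -> 'I_nS.+1 -> R) (d : 'I_nS.+1 -> 'I_nA.+1 -> R)
  (Phi : 'M[R]_(nA.+1 * nS.+1, m)) (gamma alpha beta : R).

Local Notation prodA := (prodA P d Phi gamma alpha).
Local Notation V := (Vlyap P d Phi gamma alpha beta).
Local Notation p := (plyap P d Phi gamma alpha beta).

Definition lyap_term (l : nat) (x : 'cV[R]_m) : R :=
  \big[Num.max/0]_(pis : l.-tuple (policy nS nA)) norm2 (prodA pis *m x) ^+ 2.

Definition lyap_psum (x : 'cV[R]_m) (t : nat) : R :=
  \sum_(l < t.+1) beta ^- (2 * l) * lyap_term l x.

Lemma VlyapE x : V x = limn (lyap_psum x).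
Proof. by congr (limn _); apply: funext => t; rewrite big_mkord. Qed.

Lemma lyap_term_ge0 l x : 0 <= lyap_term l x.
Proof.
by rewrite /lyap_term; elim/big_ind: _ => // [a b a0 b0|pis _]; rewrite ?le_max ?a0 ?sqr_ge0.
Qed.

Lemma lyap_weight_ge0 (l : nat) : 0 <= beta ^- (2 * l).
Proof. by rewrite invr_ge0 exprM exprn_ge0 ?sqr_ge0. Qed.

Lemma lyap_term0 l : lyap_term l 0 = 0.
Proof.
rewrite /lyap_term; elim/big_ind: _ => // [a b -> ->|pis _]; first by rewrite maxxx.
by rewrite mulmx0 norm2_0 expr0n.
Qed.

Lemma lyap_psum_nondecreasing x : nondecreasing_seq (lyap_psum x).
Proof.
apply/nondecreasing_seqP => t; rewrite /lyap_psum [leRHS]big_ord_recr /= lerDl.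
by rewrite mulr_ge0 ?lyap_weight_ge0 ?lyap_term_ge0.
Qed.

Hypothesis Vlyap_ge : forall x, norm2 x ^+ 2 <= V x.

(* If the partial sums diverged, [limn] would return its junk value [0],
   forcing [x = 0], for which they are constantly [0]. *)
Lemma lyap_psum_cvg x : cvgn (lyap_psum x).
Proof.
apply: contrapT => dvg; have := Vlyap_ge x; rewrite VlyapE (dvgP dvg) => x_le0.
have /norm2_eq0 x0 : norm2 x = 0 by apply/eqP; rewrite -sqrf_eq0 eq_le x_le0 sqr_ge0.
have psum0 : lyap_psum 0 = fun=> 0.
  by apply: funext => t; rewrite /lyap_psum big1 // => l _; rewrite lyap_term0 mulr0.
by apply: dvg; rewrite x0 psum0; exact: is_cvg_cst.
Qed.

Lemma lyap_psum_le_Vlyap x t : lyap_psum x t <= V x.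
Proof.
rewrite VlyapE; apply: nondecreasing_cvgn_le;
  [exact: lyap_psum_nondecreasing|exact: lyap_psum_cvg].
Qed.

Lemma Vlyap_le x b : (forall t, lyap_psum x t <= b) -> V x <= b.
Proof.
by move=> le_b; rewrite VlyapE; apply: limr_le; [exact: lyap_psum_cvg|exact: nearW].
Qed.

Lemma sqrt_lyap_termD l x y :
  Num.sqrt (lyap_term l (x + y)) <=
    Num.sqrt (lyap_term l x) + Num.sqrt (lyap_term l y).
Proof.
apply: sqrtr_le; first by rewrite addr_ge0 ?sqrtr_ge0.
apply: bigmax_le => [|pis _]; first exact: sqr_ge0.
rewrite ler_sqr ?nnegrE ?norm2_ge0 ?addr_ge0 ?sqrtr_ge0 // mulmxDr.
apply: le_trans (ler_norm2D _ _) _.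
by apply: lerD; apply: ler_sqrtr (norm2_ge0 _) (le_bigmax _ _ pis).
Qed.

Lemma sqrt_lyap_psumD x y t :
  Num.sqrt (lyap_psum (x + y) t) <=
    Num.sqrt (lyap_psum x t) + Num.sqrt (lyap_psum y t).
Proof.
pose sqrt_term z (l : 'I_t.+1) := Num.sqrt (lyap_term l z).
have psumE z : lyap_psum z t = \sum_(l < t.+1) beta ^- (2 * l) * sqrt_term z l ^+ 2.
  by apply: eq_bigr => l _; rewrite sqr_sqrtr ?lyap_term_ge0.
rewrite !psumE; apply: le_trans _ (weighted_minkowski
  (fun l : 'I_t.+1 => lyap_weight_ge0 l) (sqrt_term x) (sqrt_term y)).
apply: ler_wsqrtr; apply: ler_sum => l _; rewrite ler_wpM2l ?lyap_weight_ge0 //.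
by rewrite ler_sqr ?nnegrE ?addr_ge0 ?sqrtr_ge0 // sqrt_lyap_termD.
Qed.

Lemma ler_plyapD x y : p (x + y) <= p x + p y.
Proof.
rewrite /plyap.
apply: sqrtr_le; first by rewrite addr_ge0 ?sqrtr_ge0.
apply: Vlyap_le => t; apply: le_trans (_ : _ <= Num.sqrt (lyap_psum (x + y) t) ^+ 2) _.
  rewrite sqr_sqrtr // sumr_ge0 // => l _.
  by rewrite mulr_ge0 ?lyap_weight_ge0 ?lyap_term_ge0.
rewrite ler_sqr ?nnegrE ?sqrtr_ge0 ?addr_ge0 ?sqrtr_ge0 //.
apply: le_trans (sqrt_lyap_psumD x y t) _.
by apply: lerD; exact: ler_wsqrtr (lyap_psum_le_Vlyap _ _).
Qed.

Lemma plyap_contract x y : 0 < beta ->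
  (forall l, lyap_term l y <= lyap_term l.+1 x) -> p y <= beta * p x.
Proof.
move=> beta_gt0 le_term.
have -> : beta * p x = Num.sqrt (beta ^+ 2 * V x).
  by rewrite sqrtrM ?sqr_ge0 // sqrtr_sqr ger0_norm // ltW.
apply: ler_wsqrtr.
apply: Vlyap_le => t.
apply: le_trans (_ : _ <= beta ^+ 2 * lyap_psum x t.+1) _; last first.
  by rewrite ler_wpM2l ?sqr_ge0 ?lyap_psum_le_Vlyap.
rewrite [in leRHS]/lyap_psum big_ord_recl mulrDr mulr_sumr.
apply: ler_wpDl.
  by rewrite mulr_ge0 ?sqr_ge0 // mulr_ge0 ?lyap_weight_ge0 ?lyap_term_ge0.
apply: ler_sum => l _; rewrite mulrA lift0.
have -> : beta ^+ 2 * beta ^- (2 * l.+1) = beta ^- (2 * l).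
  by rewrite mulnS exprD invfM mulrA divff ?mul1r // expf_neq0 // gt_eqF.
by rewrite ler_wpM2l ?lyap_weight_ge0.
Qed.

Lemma prodA_cons pi (pis : seq (policy nS nA)) :
  prodA (pi :: pis) = prodA pis *m Api P d Phi gamma alpha pi.
Proof.
rewrite /prodA /= mulmx1 -[Api _ _ _ _ _ _ in LHS]mul1mx.
by elim: pis 1%:M => [|q s IH] M0 //=; rewrite -IH mulmxA.
Qed.

End Lyapunov.

Section TDError.
Variables (R : realType) (nS nA m : nat).
Variables (P r : 'I_nS.+1 -> 'I_nA.+1 -> 'I_nS.+1 -> R) (d : 'I_nS.+1 -> 'I_nA.+1 -> R)
  (Phi : 'M[R]_(nA.+1 * nS.+1, m)) (gamma : R) (thstar : 'cV[R]_m).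
Local Notation S := 'I_nS.+1.
Local Notation A := 'I_nA.+1.
Local Notation phi := (feat Phi).
Local Notation g := (gfun P r d Phi gamma).

Definition greedy (th : 'cV[R]_m) (s : S) : A := [arg max_(u > ord0) dotv (phi s u) th]%O.

Lemma Vth_greedy th s : Vth Phi th s = dotv (phi s (greedy th s)) th.
Proof.
rewrite /greedy; case: arg_maxP => //= u _ u_max.
by apply/eqP; rewrite eq_le le_bigmax andbT; apply: bigmax_le => [|v _]; exact: u_max.
Qed.

Lemma dotv_le_Vth th s u : dotv (phi s u) th <= Vth Phi th s.
Proof. exact: le_bigmax. Qed.

Lemma norm2_feat_le s a : norm2 (phi s a) <= phimax Phi.
Proof. by apply: le_trans (le_bigmax _ _ s); exact: le_bigmax. Qed.

Lemma phimax_ge0 : 0 <= phimax Phi.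
Proof. exact: le_trans (norm2_ge0 _) (norm2_feat_le ord0 ord0). Qed.

Lemma ler_Rmax s a s' : `|r s a s'| <= Rmax r.
Proof.
by apply: le_trans (le_bigmax _ _ s); apply: le_trans (le_bigmax _ _ a); exact: le_bigmax.
Qed.

Lemma Rmax_ge0 : 0 <= Rmax r.
Proof. exact: le_trans (normr_ge0 _) (ler_Rmax ord0 ord0 ord0). Qed.

Definition qvalue_bound (x : 'cV[R]_m) : R :=
  norminf (Phi *m thstar) + phimax Phi * norm2 x.

Lemma normr_dotv_feat_le th s a : `|dotv (phi s a) th| <= qvalue_bound (th - thstar).
Proof.
rewrite -[th in dotv _ th](subrK thstar) addrC dotvDr.
apply: le_trans (ler_normD _ _) _; apply: lerD.
  by rewrite (_ : dotv _ _ = (Phi *m thstar) (sa_index s a) 0) ?ler_norminf //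
       mxE; apply: eq_bigr => k _; rewrite !mxE.
by apply: le_trans (normr_dotv_le _ _) _; rewrite ler_wpM2r ?norm2_ge0 ?norm2_feat_le.
Qed.

Lemma normr_Vth_le th s : `|Vth Phi th s| <= qvalue_bound (th - thstar).
Proof. by rewrite Vth_greedy normr_dotv_feat_le. Qed.

Definition td_error (th : 'cV[R]_m) s a s' : R :=
  r s a s' + gamma * Vth Phi th s' - dotv (phi s a) th.

Definition td_bound (th : 'cV[R]_m) : R :=
  Rmax r + (1 + gamma) * qvalue_bound (th - thstar).

Lemma normr_td_error_le th s a s' : 0 <= gamma -> `|td_error th s a s'| <= td_bound th.
Proof.
move=> gamma_ge0; rewrite /td_error /td_bound mulrDl mul1r addrA addrAC.
apply: le_trans (ler_normB _ _) _; apply: lerD; last exact: normr_dotv_feat_le.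
apply: le_trans (ler_normD _ _) _; apply: lerD; first exact: ler_Rmax.
by rewrite normrM (ger0_norm gamma_ge0) ler_wpM2l ?normr_Vth_le.
Qed.

Hypothesis P_ge0 : forall s a s', 0 <= P s a s'.
Hypothesis P_sum1 : forall s a, \sum_s' P s a s' = 1.
Hypothesis d_ge0 : forall s a, 0 <= d s a.
Hypothesis d_sum1 : \sum_s \sum_a d s a = 1.

Lemma gfun_td_error th : g th =
  \sum_s \sum_a (d s a * \sum_s' P s a s' * td_error th s a s') *: phi s a.
Proof.
apply: eq_bigr => s _; apply: eq_bigr => a _; congr (d s a * _ *: _).
have -> : \sum_s' P s a s' * td_error th s a s' = Rexp P r s a
    + gamma * \sum_s' P s a s' * Vth Phi th s' - (\sum_s' P s a s') * dotv (phi s a) th.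
  rewrite /Rexp mulr_sumr mulr_suml -big_split -sumrB.
  by apply: eq_bigr => s' _ /=; rewrite /td_error; ring.
by rewrite P_sum1 mul1r.
Qed.

Lemma norm2_gfun_le th : 0 <= gamma -> norm2 (g th) <= td_bound th * phimax Phi.
Proof.
move=> gamma_ge0; rewrite gfun_td_error -[leRHS]mul1r -d_sum1 mulr_suml.
apply: le_trans (norm2_sum _ _ _) _; apply: ler_sum => s _; rewrite mulr_suml.
apply: le_trans (norm2_sum _ _ _) _; apply: ler_sum => a _.
rewrite norm2Z normrM (ger0_norm (d_ge0 s a)) -mulrA ler_wpM2l //.
apply: ler_pM; rewrite ?normr_ge0 ?norm2_ge0 ?norm2_feat_le //.
apply: le_trans (ler_norm_sum _ _ _) _.
rewrite -[leRHS]mul1r -(P_sum1 s a) mulr_suml; apply: ler_sum => s' _.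
by rewrite normrM (ger0_norm (P_ge0 _ _ _)) ler_wpM2l ?normr_td_error_le.
Qed.

End TDError.

Section MeanStep.
Variables (R : realType) (nS nA m : nat).
Variables (P r : 'I_nS.+1 -> 'I_nA.+1 -> 'I_nS.+1 -> R) (d : 'I_nS.+1 -> 'I_nA.+1 -> R)
  (Phi : 'M[R]_(nA.+1 * nS.+1, m)) (gamma alpha : R).
Local Notation S := 'I_nS.+1.
Local Notation phi := (feat Phi).
Local Notation g := (gfun P r d Phi gamma).
Local Notation prodA := (prodA P d Phi gamma alpha).
Local Notation lyap_term := (lyap_term P d Phi gamma alpha).

(* [x + alpha * Phi^T D (gamma P v - Phi x)]: for [v = Pi^pi Phi x] this is
   [A_pi x], for [v = V_th - V_thstar] it is the expected update of [th - thstar]. *)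
Definition mean_step (x : 'cV[R]_m) (v : S -> R) : 'cV[R]_m :=
  x + alpha *: \sum_s \sum_a
        (d s a * (gamma * \sum_s' P s a s' * v s' - dotv (phi s a) x)) *: phi s a.

Lemma mean_stepE (pi : policy nS nA) x :
  Api P d Phi gamma alpha pi *m x = mean_step x (fun s => dotv (phi s (pi s)) x).
Proof.
rewrite /Api /mean_step mulmxDl mulmxBl mul1mx -!scalemxAl !mulmx_suml.
rewrite -scalerA -addrA [- _ + _]addrC -scalerBr scaler_sumr -sumrB; congr (_ + _ *: _).
apply: eq_bigr => s _; rewrite !mulmx_suml scaler_sumr -sumrB; apply: eq_bigr => a _.
rewrite -!scalemxAl -!mulmxA !trmx_mul_dotv !mul_mx_scalar !scalerA dotv_suml.
by rewrite -scalerBl; congr (_ *: _); ring.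
Qed.

Lemma mean_step_gfun th thstar : g thstar = 0 ->
  th - thstar + alpha *: g th =
    mean_step (th - thstar) (fun s => Vth Phi th s - Vth Phi thstar s).
Proof.
move=> g_thstar; rewrite -[g th]subr0 -g_thstar /mean_step /gfun -sumrB.
congr (_ + _ *: _); apply: eq_bigr => s _; rewrite -sumrB; apply: eq_bigr => a _.
rewrite -scalerBl dotvBr; congr (_ *: _).
rewrite [X in _ = d s a * (gamma * X - _)](eq_bigr (fun s' =>
  P s a s' * Vth Phi th s' - P s a s' * Vth Phi thstar s')) ?sumrB; last first.
  by move=> s' _; rewrite mulrBr.
by ring.
Qed.

Lemma mean_step_convex x (v1 v2 : S -> R) t :
  mean_step x (fun s => t * v1 s + (1 - t) * v2 s) =
    t *: mean_step x v1 + (1 - t) *: mean_step x v2.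
Proof.
rewrite /mean_step !scalerDr !scalerA addrACA -scalerDl subrKC scale1r.
rewrite [t * alpha]mulrC [(1 - t) * alpha]mulrC -!scalerA -scalerDr.
congr (_ + _ *: _); rewrite !scaler_sumr -big_split; apply: eq_bigr => s _ /=.
rewrite !scaler_sumr -big_split; apply: eq_bigr => a _ /=.
rewrite !scalerA -scalerDl; congr (_ *: _).
rewrite [X in d s a * (gamma * X - _)](eq_bigr (fun s' =>
  t * (P s a s' * v1 s') + (1 - t) * (P s a s' * v2 s'))) ?big_split -?mulr_sumr /=.
  by ring.
by move=> s' _; ring.
Qed.

(* The vector [V_th - V_thstar] lies in the box between the values of the greedy
   actions of [thstar] and of [th]; the norm of the mean step is quasi-convex in
   it, hence dominated at a vertex, i.e. by [A_pi x] for some policy [pi]. *)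
Lemma lyap_term_mean_step_le th thstar l : g thstar = 0 ->
  lyap_term l (th - thstar + alpha *: g th) <= lyap_term l.+1 (th - thstar).
Proof.
move=> g_thstar; rewrite mean_step_gfun //; set x := th - thstar.
apply: bigmax_le => [|pis _]; first exact: lyap_term_ge0.
pose F v := norm2 (prodA pis *m mean_step x v).
have F_quasiconvex v1 v2 t : 0 <= t <= 1 ->
    F (fun s => t * v1 s + (1 - t) * v2 s) <= Num.max (F v1) (F v2).
  move=> /andP[t_ge0 t_le1]; rewrite /F mean_step_convex mulmxDr -!scalemxAr.
  apply: le_trans (ler_norm2D _ _) _; rewrite !norm2Z !ger0_norm ?subr_ge0 //.
  set M := Num.max _ _; apply: le_trans (_ : _ <= t * M + (1 - t) * M) _.
    by apply: lerD; apply: ler_wpM2l; rewrite ?subr_ge0 // le_max lexx ?orbT.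
  by rewrite -mulrDl subrKC mul1r.
have box s : dotv (phi s (greedy Phi thstar s)) x <=
    Vth Phi th s - Vth Phi thstar s <= dotv (phi s (greedy Phi th s)) x.
  rewrite !dotvBr; apply/andP; split; apply: lerB;
    by rewrite ?dotv_le_Vth ?Vth_greedy.
have [c le_vertex] := quasiconvex_box_vertex F_quasiconvex box.
pose pi : policy nS nA := [ffun s => if c s then greedy Phi th s else greedy Phi thstar s].
have vertexE : F (fun s => if c s then dotv (phi s (greedy Phi th s)) x
                         else dotv (phi s (greedy Phi thstar s)) x)
    = norm2 (prodA [tuple of pi :: pis] *m x).
  rewrite /F prodA_cons -mulmxA mean_stepE; congr (norm2 (_ *m mean_step _ _)).
  by apply: funext => s; rewrite ffunE; case: (c s).
apply: le_trans (le_bigmax _ _ [tuple of pi :: pis]).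
by rewrite ler_sqr ?nnegrE ?norm2_ge0 // -vertexE.
Qed.

Lemma plyap_mean_step_le beta th thstar :
  (forall x, norm2 x ^+ 2 <= Vlyap P d Phi gamma alpha beta x) ->
  0 < beta -> g thstar = 0 ->
  plyap P d Phi gamma alpha beta (th - thstar + alpha *: g th)
    <= beta * plyap P d Phi gamma alpha beta (th - thstar).
Proof.
move=> Vlyap_ge beta_gt0 g_thstar.
by apply: plyap_contract => // l; exact: lyap_term_mean_step_le.
Qed.

End MeanStep.

Section Sampling.
Variables (R : realType) (nS nA m : nat).
Variables (P r : 'I_nS.+1 -> 'I_nA.+1 -> 'I_nS.+1 -> R) (d : 'I_nS.+1 -> 'I_nA.+1 -> R)
  (Phi : 'M[R]_(nA.+1 * nS.+1, m)) (gamma alpha : R).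
Hypothesis P_ge0 : forall s a s', 0 <= P s a s'.
Hypothesis P_sum1 : forall s a, \sum_s' P s a s' = 1.
Hypothesis d_ge0 : forall s a, 0 <= d s a.
Hypothesis d_sum1 : \sum_s \sum_a d s a = 1.

Lemma sample_prob_ge0 w : 0 <= sample_prob P d w.
Proof. exact: mulr_ge0. Qed.

Lemma sample_prob_sum1 : \sum_w sample_prob P d w = 1.
Proof.
rewrite -(pair_bigA _ (fun sa s' => sample_prob P d (sa, s'))) /=.
rewrite -(pair_bigA _ (fun s a => \sum_s' sample_prob P d ((s, a), s'))) /= -d_sum1.
apply: eq_bigr => s _; apply: eq_bigr => a _.
by rewrite /sample_prob /= -mulr_sumr P_sum1 mulr1.
Qed.

Lemma Eiter_le th0 k (f : 'cV[R]_m -> R) (B : R) :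
  (forall ws : k.-tuple (sample nS nA), f (qiter r Phi gamma alpha th0 ws) <= B) ->
  Eiter P r d Phi gamma alpha th0 k f <= B.
Proof.
move=> f_le; apply: le_trans (_ : _ <= \sum_(ws : k.-tuple (sample nS nA))
    (\prod_(i < k) sample_prob P d (tnth ws i)) * B) _.
  apply: ler_sum => ws _; rewrite ler_wpM2l ?prodr_ge0 // => i _.
  exact: sample_prob_ge0.
by rewrite -mulr_suml sum_tuple_prod sample_prob_sum1 expr1n mul1r.
Qed.

End Sampling.

Section QLearningBounds.
Variables (R : realType) (nS nA m : nat).
Variables (P r : 'I_nS.+1 -> 'I_nA.+1 -> 'I_nS.+1 -> R) (d : 'I_nS.+1 -> 'I_nA.+1 -> R)
  (Phi : 'M[R]_(nA.+1 * nS.+1, m)) (gamma alpha : R) (thstar : 'cV[R]_m) (beta C : R).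
Local Notation phi := (feat Phi).
Local Notation g := (gfun P r d Phi gamma).
Local Notation V := (Vlyap P d Phi gamma alpha beta).
Local Notation p := (plyap P d Phi gamma alpha beta).
Local Notation lambda := (beta + 2 * alpha * Num.sqrt C * (1 + gamma) * phimax Phi ^+ 2).
Local Notation K :=
  (2 * alpha * Num.sqrt C * phimax Phi * (Rmax r + (1 + gamma) * norminf (Phi *m thstar))).

Lemma qstep_subE th s a s' :
  qstep r Phi gamma alpha th (s, a, s') - thstar =
    (th - thstar + alpha *: g th)
    + alpha *: (td_error r Phi gamma th s a s' *: phi s a - g th).
Proof.
rewrite /= /td_error scalerBr scalerA; set u := _ *: phi s a; set G := alpha *: g th.
by rewrite addrA (addrAC _ G u) addrK addrAC.
Qed.

Hypothesis gamma_ge0 : 0 <= gamma.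
Hypothesis alpha_ge0 : 0 <= alpha.
Hypothesis P_ge0 : forall s a s', 0 <= P s a s'.
Hypothesis P_sum1 : forall s a, \sum_s' P s a s' = 1.
Hypothesis d_ge0 : forall s a, 0 <= d s a.
Hypothesis d_sum1 : \sum_s \sum_a d s a = 1.
Hypothesis g_thstar : g thstar = 0.
Hypothesis beta_gt0 : 0 < beta.
Hypothesis Vlyap_bounds : forall x, norm2 x ^+ 2 <= V x <= C * norm2 x ^+ 2.

Lemma norm2_le_plyap x : norm2 x <= p x.
Proof. by apply: ler_sqrtr (norm2_ge0 x) _; case/andP: (Vlyap_bounds x). Qed.

Lemma plyap_le x : p x <= Num.sqrt C * norm2 x.
Proof.
rewrite mulrC -[norm2 x]ger0_norm ?norm2_ge0 // -sqrtr_sqr -sqrtrM ?sqr_ge0 //.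
by apply: ler_wsqrtr; rewrite mulrC; case/andP: (Vlyap_bounds x).
Qed.

Lemma norm2_td_noise_le th s a s' :
  norm2 (td_error r Phi gamma th s a s' *: phi s a - g th) <=
    2 * (td_bound r Phi gamma thstar th * phimax Phi).
Proof.
rewrite mulr2n mulrDl mul1r; apply: le_trans (ler_norm2D _ _) _.
rewrite norm2N norm2Z lerD ?norm2_gfun_le //.
by rewrite ler_pM ?normr_ge0 ?norm2_ge0 ?normr_td_error_le ?norm2_feat_le.
Qed.

Lemma td_bound_le_plyap th :
  td_bound r Phi gamma thstar th <=
    Rmax r + (1 + gamma) * norminf (Phi *m thstar)
    + (1 + gamma) * phimax Phi * p (th - thstar).
Proof.
rewrite /td_bound /qvalue_bound mulrDr addrA -mulrA lerD2l.
by rewrite ler_wpM2l ?addr_ge0 // ler_wpM2l ?phimax_ge0 ?norm2_le_plyap.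
Qed.

(* The mean step contracts [p] by [beta]; the noise is bounded pathwise in [norm2],
   hence in [p] up to the factor [sqrt C]. *)
Lemma plyap_qstep_le th w :
  p (qstep r Phi gamma alpha th w - thstar) <= lambda * p (th - thstar) + K.
Proof.
have Vlyap_ge x : norm2 x ^+ 2 <= V x by case/andP: (Vlyap_bounds x).
case: w => [[s a] s']; rewrite qstep_subE.
apply: le_trans (ler_plyapD Vlyap_ge _ _) _.
apply: le_trans (lerD (plyap_mean_step_le th Vlyap_ge beta_gt0 g_thstar) (plyap_le _)) _.
set x := th - thstar.
have noise_le : Num.sqrt C * norm2 (alpha *: (td_error r Phi gamma th s a s' *: phi s a - g th))
    <= Num.sqrt C * (alpha * (2 * ((Rmax r + (1 + gamma) * norminf (Phi *m thstar)
                                  + (1 + gamma) * phimax Phi * p x) * phimax Phi))).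
  rewrite norm2Z ger0_norm // ler_wpM2l ?sqrtr_ge0 // ler_wpM2l //.
  apply: le_trans (norm2_td_noise_le _ _ _ _) _.
  by rewrite ler_wpM2l // ler_wpM2r ?phimax_ge0 ?td_bound_le_plyap.
apply: le_trans (lerD (lexx _) noise_le) _.
by rewrite le_eqVlt; apply/orP; left; apply/eqP; ring.
Qed.

Lemma contraction_factor_ge0 : 0 <= lambda.
Proof.
apply: addr_ge0; first exact: ltW.
by do ![apply: addr_ge0 | apply: mulr_ge0]; rewrite ?ler01 ?sqrtr_ge0 ?phimax_ge0.
Qed.

Hypothesis lambda_lt1 : lambda < 1.

Let K_ge0 : 0 <= K.
Proof.
do ![apply: addr_ge0 | apply: mulr_ge0];
  by rewrite ?ler01 ?sqrtr_ge0 ?phimax_ge0 ?Rmax_ge0 ?norminf_ge0.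
Qed.

Lemma plyap_qiter_le th0 ws :
  p (qiter r Phi gamma alpha th0 ws - thstar) <=
    lambda ^+ size ws * p (th0 - thstar) + K / (1 - lambda) * (1 - lambda ^+ size ws).
Proof.
exact: (foldl_affine_le (f := fun th => p (th - thstar))
  lambda_lt1 contraction_factor_ge0 plyap_qstep_le).
Qed.

Lemma norm2_qiter_le th0 ws :
  norm2 (qiter r Phi gamma alpha th0 ws - thstar) <=
    Num.sqrt C * lambda ^+ size ws * norm2 (th0 - thstar) + K / (1 - lambda).
Proof.
apply: le_trans (norm2_le_plyap _) _; apply: le_trans (plyap_qiter_le _ _) _.
apply: lerD; first by rewrite [leRHS]mulrAC [leRHS]mulrC ler_wpM2l ?exprn_ge0
  ?contraction_factor_ge0 ?plyap_le.
by rewrite -[leRHS]mulr1 ler_wpM2l ?divr_ge0 ?subr_ge0 ?(ltW lambda_lt1) // gerBl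
  exprn_ge0 ?contraction_factor_ge0.
Qed.

Local Notation E := (Eiter P r d Phi gamma alpha).

Lemma Eiter_plyap_le th0 k :
  E th0 k (fun th => p (th - thstar)) <=
    lambda ^+ k * p (th0 - thstar) + K / (1 - lambda) * (1 - lambda ^+ k).
Proof. by apply: Eiter_le => // ws; have := plyap_qiter_le th0 ws; rewrite size_tuple. Qed.

Lemma Eiter_norm2_le th0 k :
  E th0 k (fun th => norm2 (th - thstar)) <=
    Num.sqrt C * lambda ^+ k * norm2 (th0 - thstar) + K / (1 - lambda).
Proof. by apply: Eiter_le => // ws; have := norm2_qiter_le th0 ws; rewrite size_tuple. Qed.

Lemma Eiter_norm2_feat_le th0 k :
  E th0 k (fun th => norm2 (Phi *m th - Phi *m thstar)) <=
    opnorm2 Phi * (Num.sqrt C * lambda ^+ k * norm2 (th0 - thstar) + K / (1 - lambda)).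
Proof.
apply: Eiter_le => // ws; rewrite -mulmxBr; apply: le_trans (norm2_mulmx_le_opnorm2 _ _) _.
by rewrite ler_wpM2l ?opnorm2_ge0 //; have := norm2_qiter_le th0 ws; rewrite size_tuple.
Qed.

End QLearningBounds.

Theorem theorem3 (R : realType) (nS nA m : nat)
  (P : 'I_nS.+1 -> 'I_nA.+1 -> 'I_nS.+1 -> R)
  (r : 'I_nS.+1 -> 'I_nA.+1 -> 'I_nS.+1 -> R)
  (d : 'I_nS.+1 -> 'I_nA.+1 -> R)
  (Phi : 'M[R]_(nA.+1 * nS.+1, m))
  (gamma alpha : R)
  (thstar th0 : 'cV[R]_m) (eps C : R) :
  0 < gamma < 1 ->
  0 < alpha < 1 ->
  (forall s a s', 0 <= P s a s') ->
  (forall s a, \sum_s' P s a s' = 1) ->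
  (forall s a, 0 < d s a) ->
  \sum_s \sum_a d s a = 1 ->
  row_full Phi ->
  rho_dir P d Phi gamma alpha < 1 ->
  gfun P r d Phi gamma thstar = 0 ->
  0 < eps ->
  rho_dir P d Phi gamma alpha + eps < 1 ->
  1 <= C ->
  (forall x, norm2 x ^+ 2 <= Vlyap P d Phi gamma alpha (rho_dir P d Phi gamma alpha + eps) x
             <= C * norm2 x ^+ 2) ->
  let beta := rho_dir P d Phi gamma alpha + eps in
  let lambda := beta + 2 * alpha * Num.sqrt C * (1 + gamma) * phimax Phi ^+ 2 in
  lambda < 1 ->
  let K := 2 * alpha * Num.sqrt C * phimax Phi *
           (Rmax r + (1 + gamma) * norminf (Phi *m thstar)) in
  let Ek := Eiter P r d Phi gamma alpha th0 in
  (forall k : nat,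
     Ek k (fun th => plyap P d Phi gamma alpha beta (th - thstar))
       <= lambda ^+ k * plyap P d Phi gamma alpha beta (th0 - thstar)
          + K / (1 - lambda) * (1 - lambda ^+ k)) /\
  (forall k : nat,
     Ek k (fun th => norm2 (th - thstar))
       <= Num.sqrt C * lambda ^+ k * norm2 (th0 - thstar) + K / (1 - lambda)) /\
  (limn_esup (fun k : nat => (Ek k (fun th => norm2 (th - thstar)))%:E)
     <= (K / (1 - lambda))%:E)%E /\
  (forall k : nat,
     Ek k (fun th => norm2 (Phi *m th - Phi *m thstar))
       <= opnorm2 Phi * (Num.sqrt C * lambda ^+ k * norm2 (th0 - thstar)
                         + K / (1 - lambda))).
Proof.
move=> /andP[/ltW gamma_ge0 _] /andP[/ltW alpha_ge0 _] P_ge0 P_sum1 d_gt0 d_sum1 _ _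
  g_thstar eps_gt0 _ _ Vlyap_bounds beta lambda lambda_lt1 K Ek.
have d_ge0 s a : 0 <= d s a := ltW (d_gt0 s a).
have beta_gt0 : 0 < beta by apply: ltr_wpDl eps_gt0; apply: limn_ge0 => k; exact: powR_ge0.
have norm2_le k : Ek k (fun th => norm2 (th - thstar)) <=
    Num.sqrt C * lambda ^+ k * norm2 (th0 - thstar) + K / (1 - lambda).
  exact: Eiter_norm2_le.
split; first by move=> k; apply: Eiter_plyap_le.
split=> //; split; last by move=> k; apply: Eiter_norm2_feat_le.
apply: (@limn_esup_le_geometric _ _ (Num.sqrt C * norm2 (th0 - thstar)) lambda).
  by rewrite ger0_norm //; apply: contraction_factor_ge0.
by move=> k; rewrite mulrAC.
Qed.
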